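(* Let $n\ge2$, $\sigma\ge2$, and let $s$ be a random string of length $n$ with characters i.i.d. uniform over an alphabet of size $\sigma$; let $k$ be the number of tokens of $\mathcal{F}(s)$. Put $p=(\sigma-1)/\sigma$, $m=n-1$, $q=(2-\sigma)/\sigma$. Then \[\mathrm{Var}[k]=\frac{mp(1-p)}{4}-\frac{mp(1-p)\,q^{m-1}}{2}+\frac{1-q^{2m}}{16}.\] In particular $\mathrm{Var}[k]=0$ when $n=2$, and $\mathrm{Var}[k]-(n-1)(\sigma-1)/(4\sigma^2)$ is bounded independently of $n$.
   Context: Let $\texttt{@},\texttt{\$}$ be two distinct symbols not in the alphabet. For a string $s$ of length $n$ let $\hat s=\texttt{@}\,s\,\texttt{\$}$ (positions $1,\dots,n+2$); $\hat s[i..j)$ is the substring at positions $i,\dots,j-1$. The leading (trailing) run of a non-empty string is its longest prefix (suffix) consisting of one repeated symbol. The Flashback decomposition $\mathcal{F}(s)$ is the sequence of tokens (pairs $(\sigma,p)$) produced as follows, starting from active span $[lo,hi)=[1,n+3)$: if $lo\ge hi$, stop. Let $\ell$ be the leading-run length of $\hat s[lo..hi)$. If $\ell=hi-lo$, append $(\hat s[lo..hi),0)$ and stop. Otherwise let $\hat s[r..hi)$ be the trailing run of $\hat s[lo..hi)$ and $\sigma=\hat s[lo..lo+\ell)\cdot\hat s[r..hi)$; if $lo+\ell\ge r$, append $(\sigma,0)$ and stop; otherwise append $(\sigma,\ell)$ and repeat with $[lo+\ell,r)$. *)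

From mathcomp Require Import all_boot all_order all_algebra.
Set Implicit Arguments. Unset Strict Implicit. Unset Printing Implicit Defensive.
Import Order.TTheory GRing.Theory Num.Theory.

(* Symbols are encoded as naturals: the alphabet of size sigma is {0,..,sigma-1},
   '@' is encoded by sigma and '$' by sigma+1 (two distinct symbols not in the alphabet). *)

Definition lead_run (w : seq nat) : nat :=
  match w with
  | [::] => 0
  | x :: t => (find (fun y => y != x) t).+1
  end.

Definition trail_run (w : seq nat) : nat := lead_run (rev w).

(* Flashback decomposition of the active span w (= \hat s[lo..hi)), with fuel. *)
Fixpoint flashback_aux (fuel : nat) (w : seq nat) : seq (seq nat * nat) :=
  match fuel with
  | 0 => [::]
  | fuel'.+1 =>
    if w is [::] then [::] else
    let l := lead_run w in
    if l == size w then [:: (w, 0)] else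
    let r := size w - trail_run w in
    let sg := take l w ++ drop r w in
    if r <= l then [:: (sg, 0)]
    else (sg, l) :: flashback_aux fuel' (drop l (take r w))
  end.

Definition flashback (w : seq nat) := flashback_aux (size w).+1 w.

Definition hat (sigma : nat) (s : seq nat) : seq nat := sigma :: s ++ [:: sigma.+1].

Definition ntokens (sigma n : nat) (s : n.-tuple 'I_sigma) : nat :=
  size (flashback (hat sigma (map val s))).

Local Open Scope ring_scope.

(* expectation / variance under the uniform distribution on strings of length n
   (i.i.d. uniform characters) *)
Definition Expect (sigma n : nat) (X : n.-tuple 'I_sigma -> rat) : rat :=
  (\sum_(s : n.-tuple 'I_sigma) X s) / #|{: n.-tuple 'I_sigma}|%:R.

Definition Var (sigma n : nat) (X : n.-tuple 'I_sigma -> rat) : rat :=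
  Expect (fun s => X s ^+ 2) - (Expect X) ^+ 2.

Definition var_k (sigma n : nat) : rat :=
  Var (fun s : n.-tuple 'I_sigma => (ntokens s)%:R).

(* Call i a change of a string if its letters i and i+1 differ.  A step of
   the Flashback decomposition that recurses strips the leading and the
   trailing run of the active span, removing exactly two changes, and the
   final step absorbs at most one; as \hat s has c + 2 changes when s has c,
   F(s) has ⌊c/2⌋ + 2 tokens.  For i.i.d. uniform letters the m = n - 1
   adjacent pairs of s are changes independently with probability p
   (condition on the first letter), so c is binomial B(m, p).  With
   ⌊c/2⌋ = c/2 - 1/4 + (-1)^c/4 the variance only needs E c, E c^2,
   E (-1)^c = (1 - 2p)^m = q^m and E c(-1)^c.  Finally 4p(1 - p) = 1 - q^2
   and (k+1) r^k (1 - r) <= 1 for 0 <= r <= 1 bound the deviation from the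
   linear term by 1. *)

From mathcomp Require Import all_boot all_order all_algebra.
From mathcomp Require Import zify ring lra.
Set Implicit Arguments.
Unset Strict Implicit.
Unset Printing Implicit Defensive.
Import Order.TTheory GRing.Theory Num.Theory.

Fixpoint nchanges (w : seq nat) : nat :=
  if w is x :: (y :: _) as t then (x != y) + nchanges t else 0.

Lemma nchanges_nseq k x : nchanges (nseq k x) = 0.
Proof. by elim: k => [|[|k] IH] //=; rewrite eqxx. Qed.

Lemma nchanges_cons2 x y w :
  nchanges [:: x, y & w] = (x != y) + nchanges (y :: w).
Proof. by []. Qed.

Lemma nchanges_cat a b : a != [::] -> b != [::] ->
  nchanges (a ++ b) = nchanges a + nchanges b + (last 0 a != head 0 b).
Proof.
case: a => [|x a] // _; case: b => [|y b] // _.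
elim: a x => [|z a IH] x; first by rewrite /= addnC.
by rewrite !cat_cons nchanges_cons2 -cat_cons IH nchanges_cons2 /=; lia.
Qed.

Lemma nchanges_two_runs a b x y : nchanges (nseq a x ++ nseq b y) <= 1.
Proof.
case: a => [|a]; first by rewrite nchanges_nseq.
case: b => [|b]; first by rewrite cats0 nchanges_nseq.
by rewrite nchanges_cat // !nchanges_nseq; case: (_ != _).
Qed.

Lemma nchanges_three_runs a b x y u : 0 < a -> 0 < b -> u != [::] ->
  head 0 u != x -> last 0 u != y ->
  nchanges (nseq a x ++ u ++ nseq b y) = (nchanges u).+2.
Proof.
case: a => // a _; case: b => // b _ u0 hu lu.
have uy0 : u ++ nseq b.+1 y != [::] by case: (u) u0.
rewrite nchanges_cat // nchanges_cat // !nchanges_nseq /=.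
have -> : head 0 (u ++ nseq b.+1 y) = head 0 u by case: (u) u0.
have -> : last x (nseq a x) = x by elim: a.
by rewrite lu eq_sym hu; lia.
Qed.

Lemma take_lead_run w : take (lead_run w) w = nseq (lead_run w) (head 0 w).
Proof.
case: w => [|x t] //=; congr (_ :: _).
by elim: t => [|z t IH] //=; case: eqP => [->|] //=; rewrite IH.
Qed.

Lemma nth_lead_run w :
  lead_run w < size w -> nth 0 w (lead_run w) != head 0 w.
Proof. by case: w => [|x t] //=; rewrite ltnS -has_find => /(nth_find 0). Qed.

Lemma lead_run_le_size w : lead_run w <= size w.
Proof. by case: w => [|x t] //=; rewrite ltnS find_size. Qed.

Lemma head_rev (w : seq nat) : head 0 (rev w) = last 0 w.
Proof. by case/lastP: w => // w y; rewrite rev_rcons last_rcons. Qed.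

Lemma drop_trail_run w :
  drop (size w - trail_run w) w = nseq (trail_run w) (last 0 w).
Proof.
apply: (can_inj revK); rewrite rev_nseq -take_rev -head_rev.
exact: take_lead_run.
Qed.

Lemma nth_trail_run w : trail_run w < size w ->
  nth 0 w (size w - (trail_run w).+1) != last 0 w.
Proof.
rewrite -head_rev /trail_run => lt_w.
by rewrite -nth_rev // nth_lead_run // size_rev.
Qed.

Lemma flashback_auxS fuel (w : seq nat) : w != [::] ->
  flashback_aux fuel.+1 w =
    let l := lead_run w in if l == size w then [:: (w, 0)] else
    let r := size w - trail_run w in
    let sg := take l w ++ drop r w in
    if r <= l then [:: (sg, 0)]
    else (sg, l) :: flashback_aux fuel (drop l (take r w)).
Proof. by case: w. Qed.

Lemma size_flashback_aux fuel (w : seq nat) : w != [::] -> size w < fuel ->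
  size (flashback_aux fuel w) = (nchanges w)./2 + 1.
Proof.
elim: fuel w => [|fuel IH] w // w0 lt_w_fuel.
rewrite flashback_auxS //=.
set l := lead_run w; set tr := trail_run w; set r := size w - tr.
have l_gt0 : 0 < l by rewrite /l; case: (w) w0.
have tr_gt0 : 0 < tr.
  have : ~~ nilp (rev w) by rewrite rev_nilp /nilp size_eq0.
  by rewrite /tr /trail_run; case: (rev w).
have take_l : take l w = nseq l (head 0 w) := take_lead_run w.
have drop_r : drop r w = nseq tr (last 0 w) := drop_trail_run w.
case: eqP => [l_eq | /eqP l_neq].
  by rewrite -[w in nchanges w]take_size -l_eq take_l nchanges_nseq.
have lt_l : l < size w by rewrite ltn_neqAle l_neq lead_run_le_size.
case: leqP => [r_le_l | l_lt_r].
  suff : nchanges w <= 1 by case: (nchanges w) => [|[|]].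
  have drop_l : drop l w = nseq (tr - (l - r)) (last 0 w).
    by rewrite -{1}(subnK r_le_l) -drop_drop drop_r drop_nseq.
  by rewrite -[w](cat_take_drop l) take_l drop_l nchanges_two_runs.
set u := drop l (take r w).
have size_u : size u = r - l.
  by rewrite size_drop size_take; case: ltnP; lia.
have u0 : u != [::] by rewrite -size_eq0 size_u; lia.
have lt_tr : tr < size w by move: l_lt_r; rewrite /r; lia.
have head_u : head 0 u != head 0 w.
  by rewrite -nth0 nth_drop addn0 nth_take ?nth_lead_run.
have last_u : last 0 u != last 0 w.
  rewrite -nth_last size_u nth_drop nth_take; last by lia.
  have := nth_trail_run lt_tr; congr (nth _ _ _ != _).
  by move: l_lt_r; rewrite -/tr /r; lia.
have -> : w = nseq l (head 0 w) ++ u ++ nseq tr (last 0 w).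
  rewrite -take_l -drop_r catA -{1}(take_takel _ (ltnW l_lt_r)).
  by rewrite !cat_take_drop.
rewrite nchanges_three_runs //= IH // size_u; lia.
Qed.

Lemma nchanges_hat sigma (w : seq nat) :
  w != [::] -> all (fun x => x < sigma) w ->
  nchanges (hat sigma w) = (nchanges w).+2.
Proof.
case: w => [|x t] // _ /allP w_lt.
apply: (@nchanges_three_runs 1 1) => //=.
  by rewrite neq_ltn w_lt ?mem_head.
by rewrite neq_ltn ltnS ltnW ?w_lt ?mem_last.
Qed.

Lemma ntokensE sigma n (s : n.+1.-tuple 'I_sigma) :
  ntokens s = (nchanges (map val s))./2 + 2.
Proof.
have s0 : map val s != [::] by rewrite -size_eq0 size_map size_tuple.
have s_lt : all (fun x => x < sigma) (map val s).
  by apply/allP => _ /mapP[i _ ->]; apply: ltn_ord.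
rewrite /ntokens /flashback size_flashback_aux ?nchanges_hat //=.
by rewrite addn1 addn2.
Qed.

Local Open Scope ring_scope.

Section BinomialExpectation.
Variables (R : comPzRingType) (p : R).

Definition binomE k (F : nat -> R) : R :=
  \sum_(i < k.+1) 'C(k, i)%:R * p ^+ i * (1 - p) ^+ (k - i) * F i.

Lemma binomE0 F : binomE 0 F = F 0%N.
Proof. by rewrite /binomE big_ord1 /= mul1r mulr1 mul1r. Qed.

Lemma binomES k F :
  binomE k.+1 F = binomE k (fun c => (1 - p) * F c + p * F c.+1).
Proof.
rewrite /binomE.
have -> : \sum_(i < k.+1)
      'C(k, i)%:R * p ^+ i * (1 - p) ^+ (k - i) * ((1 - p) * F i + p * F i.+1)
    = \sum_(i < k.+1) 'C(k, i)%:R * p ^+ i * (1 - p) ^+ (k - i).+1 * F i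
    + \sum_(i < k.+1) 'C(k, i)%:R * p ^+ i.+1 * (1 - p) ^+ (k - i) * F i.+1.
  by rewrite -big_split; apply: eq_bigr => i _; rewrite !exprS /=; ring.
rewrite big_ord_recl.
under eq_bigr => i _ do rewrite lift0 binS natrD !mulrDl.
rewrite big_split /= addrA; congr (_ + _).
rewrite [in RHS]big_ord_recl big_ord_recr /= (@bin_small k k.+1) //.
rewrite mulr0n !mul0r addr0.
congr (_ + _); first by rewrite !bin0 !subn0.
by apply: eq_bigr => i _; rewrite /bump leq0n add1n subSn.
Qed.

Lemma eq_binomE k F G : F =1 G -> binomE k F = binomE k G.
Proof. by move=> eqFG; apply: eq_bigr => i _; rewrite eqFG. Qed.

Lemma binomED k F G : binomE k (fun c => F c + G c) = binomE k F + binomE k G.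
Proof. by rewrite -big_split; apply: eq_bigr => i _; rewrite mulrDr. Qed.

Lemma binomEZ k a F : binomE k (fun c => a * F c) = a * binomE k F.
Proof. by rewrite mulr_sumr; apply: eq_bigr => i _; rewrite mulrCA. Qed.

Lemma binomE_cst k a : binomE k (fun _ => a) = a.
Proof.
elim: k => [|k IH]; first exact: binomE0.
by rewrite binomES (@eq_binomE _ _ (fun _ => a)) // => c; ring.
Qed.

Lemma binomE_id k : binomE k (fun c => c%:R) = k%:R * p.
Proof.
elim: k => [|k IH]; first by rewrite binomE0 mul0r.
rewrite binomES (@eq_binomE _ _ (fun c => c%:R + p)) => [|c].
  by rewrite binomED IH binomE_cst -natr1; ring.
by rewrite -natr1; ring.
Qed.

Lemma binomE_sqr k :
  binomE k (fun c => c%:R ^+ 2) = k%:R * p * (1 - p) + (k%:R * p) ^+ 2.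
Proof.
elim: k => [|k IH]; first by rewrite binomE0 !mul0r expr0n add0r.
rewrite binomES
  (@eq_binomE _ _ (fun c => c%:R ^+ 2 + 2 * p * c%:R + p)) => [|c].
  by rewrite !binomED binomEZ IH binomE_id binomE_cst -natr1; ring.
by rewrite -natr1; ring.
Qed.

Lemma binomE_sign k : binomE k (fun c => (-1) ^+ c) = (1 - 2 * p) ^+ k.
Proof.
elim: k => [|k IH]; first by rewrite binomE0.
rewrite binomES (@eq_binomE _ _ (fun c => (1 - 2 * p) * (-1) ^+ c)) => [|c].
  by rewrite binomEZ IH exprS.
by rewrite exprS; ring.
Qed.

Lemma binomE_id_sign k :
  binomE k.+1 (fun c => c%:R * (-1) ^+ c) = - k.+1%:R * p * (1 - 2 * p) ^+ k.
Proof.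
elim: k => [|k IH]; first by rewrite binomES binomE0; ring.
rewrite binomES (@eq_binomE _ _
  (fun c => (1 - 2 * p) * (c%:R * (-1) ^+ c) + (- p) * (-1) ^+ c)) => [|c].
  by rewrite binomED !binomEZ IH binomE_sign -(@natr1 _ k.+1) exprS; ring.
by rewrite exprS -natr1; ring.
Qed.

End BinomialExpectation.

Section TokenVariance.
Variable R : numFieldType.

Lemma half_add2E c :
  ((c./2 + 2)%:R : R) = 2^-1 * c%:R + 7 / 4 + 4^-1 * (-1) ^+ c.
Proof.
rewrite natrD -signr_odd -[in c%:R](odd_double_half c) natrD -muln2 natrM.
by case: (odd c) => /=; field.
Qed.

Lemma half_add2_sqrE c : ((c./2 + 2)%:R : R) ^+ 2 =
  4^-1 * c%:R ^+ 2 + 7 / 4 * c%:R + 25 / 8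
  + (4^-1 * (c%:R * (-1) ^+ c) + 7 / 8 * (-1) ^+ c).
Proof.
rewrite natrD -signr_odd -![in c%:R](odd_double_half c) natrD -muln2 natrM.
by case: (odd c) => /=; field.
Qed.

Lemma binomE_var_half_add2 (p : R) m :
  binomE p m.+1 (fun c => (c./2 + 2)%:R ^+ 2)
    - binomE p m.+1 (fun c => (c./2 + 2)%:R) ^+ 2 =
  m.+1%:R * p * (1 - p) / 4 - m.+1%:R * p * (1 - p) * (1 - 2 * p) ^+ m / 2
  + (1 - (1 - 2 * p) ^+ (2 * m.+1)) / 16.
Proof.
rewrite (eq_binomE _ _ half_add2_sqrE) (eq_binomE _ _ half_add2E).
rewrite !binomED !binomEZ !binomE_cst.
rewrite binomE_sqr binomE_id binomE_sign binomE_id_sign.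
by rewrite mulnC exprM !exprS; field.
Qed.

End TokenVariance.

Lemma sum_tuple_cons (T : finType) (V : nmodType) k (G : k.+1.-tuple T -> V) :
  \sum_(s : k.+1.-tuple T) G s
  = \sum_(t : k.-tuple T) \sum_(x : T) G [tuple of x :: t].
Proof.
rewrite (reindex (fun xt : T * k.-tuple T => [tuple of xt.1 :: xt.2])) /=.
  rewrite -(pair_bigA _ (fun (x : T) (t : k.-tuple T) => G [tuple of x :: t])).
  exact: exchange_big.
exists (fun s : k.+1.-tuple T => (thead s, [tuple of behead s])).
  by move=> [x t] _; congr pair; apply: val_inj.
by move=> s _; rewrite [in RHS](tuple_eta s).
Qed.

Lemma eq_Expect sigma n (X Y : n.-tuple 'I_sigma -> rat) :
  X =1 Y -> Expect X = Expect Y.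
Proof. by move=> eqXY; rewrite /Expect (eq_bigr _ (fun s _ => eqXY s)). Qed.

Lemma Expect_cst sigma n (a : rat) : (0 < sigma)%N ->
  Expect (fun _ : n.-tuple 'I_sigma => a) = a.
Proof.
move=> sigma_gt0; rewrite /Expect sumr_const !card_tuple card_ord.
rewrite -[a *+ _]mulr_natr mulfK //.
by rewrite pnatr_eq0 -lt0n expn_gt0 sigma_gt0.
Qed.

Lemma Expect_tuple_cons sigma k (X : k.+1.-tuple 'I_sigma -> rat) :
  Expect X = Expect (fun t : k.-tuple 'I_sigma =>
                       sigma%:R^-1 * \sum_(x : 'I_sigma) X [tuple of x :: t]).
Proof.
rewrite /Expect sum_tuple_cons -mulr_sumr !card_tuple card_ord.
by rewrite expnS natrM invfM mulrCA mulrA.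
Qed.

Lemma sum_neq_addn (T : finType) (V : nmodType) (x0 : T) (G : nat -> V) c :
  \sum_(x : T) G ((x != x0) + c)%N = G c + G c.+1 *+ #|T|.-1.
Proof.
rewrite (bigD1 x0) //= eqxx add0n; congr (_ + _).
by rewrite (eq_bigr (fun _ => G c.+1)) ?sumr_const ?cardC1 // => x /negbTE ->.
Qed.

Lemma Expect_nchanges sigma k F : (0 < sigma)%N ->
  Expect (fun s : k.+1.-tuple 'I_sigma => F (nchanges (map val s)))
  = binomE ((sigma%:R - 1) / sigma%:R) k F.
Proof.
move=> sigma_gt0; elim: k F => [|k IH] F.
  rewrite binomE0 -(Expect_cst 1 (F 0%N) sigma_gt0).
  by apply: eq_Expect => -[[|x [|]]].
rewrite binomES -IH Expect_tuple_cons; apply: eq_Expect => t.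
rewrite (eq_bigr (fun x : 'I_sigma =>
                   F ((x != thead t) + nchanges (map val t))%N)).
  rewrite sum_neq_addn card_ord -[_ *+ sigma.-1]mulr_natl -subn1 natrB //.
  have sigma_neq0 : sigma%:R != 0 :> rat by rewrite pnatr_eq0 -lt0n.
  by field.
by move=> x _; case: t => -[|y w] sz.
Qed.

Lemma Expect_ntokens sigma n (G : nat -> rat) : (0 < sigma)%N ->
  Expect (fun s : n.+1.-tuple 'I_sigma => G (ntokens s))
  = binomE ((sigma%:R - 1) / sigma%:R) n (fun c => G (c./2 + 2)%N).
Proof.
move=> sigma_gt0; rewrite -Expect_nchanges //.
by apply: eq_Expect => s; rewrite ntokensE.
Qed.

Lemma var_kE sigma m : (0 < sigma)%N ->
  let p : rat := (sigma%:R - 1) / sigma%:R in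
  let q : rat := (2 - sigma%:R) / sigma%:R in
  var_k sigma m.+2 = m.+1%:R * p * (1 - p) / 4
    - m.+1%:R * p * (1 - p) * q ^+ m / 2 + (1 - q ^+ (2 * m.+1)) / 16.
Proof.
move=> sigma_gt0 p q.
rewrite /var_k /Var (@Expect_ntokens _ _ (fun k => k%:R ^+ 2)) //.
rewrite (@Expect_ntokens _ _ (fun k => k%:R)) // binomE_var_half_add2.
suff -> : 1 - 2 * p = q by [].
by rewrite /p /q; field; rewrite pnatr_eq0 -lt0n.
Qed.

Lemma natr_mul_expr_le1 (R : realFieldType) (r : R) k : 0 <= r -> r <= 1 ->
  k.+1%:R * r ^+ k * (1 - r) <= 1.
Proof.
move=> r_ge0 r_le1.
suff : k.+1%:R * r ^+ k * (1 - r) <= 1 - r ^+ k.+1.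
  by have := exprn_ge0 k.+1 r_ge0; lra.
elim: k => [|k IH]; first by rewrite expr0 expr1 mulr1 mul1r.
have rk_ge0 : 0 <= r ^+ k by rewrite exprn_ge0.
have rk_le1 : r ^+ k <= 1 by rewrite exprn_ile1.
have k_ge0 : 0 <= k%:R :> R by rewrite ler0n.
move: IH; rewrite !exprS -!natr1 => IH.
have := ler_wpM2l r_ge0 IH.
have : 0 <= (1 - r) * (1 - r * r ^+ k) by apply: mulr_ge0; nra.
nra.
Qed.

Lemma norm_natr_mul_sqr_expr_le2 (R : realFieldType) (q : R) k : `|q| <= 1 ->
  `|k.+1%:R * (1 - q ^+ 2) * q ^+ k| <= 2.
Proof.
move=> q_le1; have q_ge0 := normr_ge0 q.
have bound := natr_mul_expr_le1 k q_ge0 q_le1.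
have sqr_q : q ^+ 2 = `|q| ^+ 2 by rewrite real_normK ?num_real.
rewrite !normrM normrX sqr_q normr_nat.
rewrite [`|1 - _|]ger0_norm ?subr_ge0 ?exprn_ile1 //.
have -> : k.+1%:R * (1 - `|q| ^+ 2) * `|q| ^+ k
          = k.+1%:R * `|q| ^+ k * (1 - `|q|) * (1 + `|q|) by ring.
have : 0 <= k.+1%:R * `|q| ^+ k * (1 - `|q|).
  by rewrite !mulr_ge0 ?ler0n ?exprn_ge0 ?subr_ge0.
nra.
Qed.

Lemma var_k_sub_linear_le1 sigma m : (2 <= sigma)%N ->
  `|var_k sigma m.+2 - m.+1%:R * (sigma%:R - 1) / (4 * sigma%:R ^+ 2)| <= 1.
Proof.
move=> sigma_ge2; rewrite var_kE ?(leq_trans _ sigma_ge2) //=.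
have sigma_ge2R : 2 <= sigma%:R :> rat by rewrite (ler_nat _ 2).
set p : rat := (sigma%:R - 1) / sigma%:R.
set q : rat := (2 - sigma%:R) / sigma%:R.
have -> : m.+1%:R * (sigma%:R - 1) / (4 * sigma%:R ^+ 2)
          = m.+1%:R * p * (1 - p) / 4.
  by rewrite /p; field; lra.
have pq : p * (1 - p) = (1 - q ^+ 2) / 4 by rewrite /p /q; field; lra.
rewrite -(mulrA _ p) pq.
have q_le1 : `|q| <= 1.
  rewrite normrM normfV ler0_norm ?ger0_norm; [|lra|lra].
  by rewrite ler_pdivrMr; lra.
have q2_le1 : q ^+ 2 <= 1 by rewrite -real_normK ?num_real // exprn_ile1.
have : 0 <= q ^+ (2 * m.+1) <= 1.
  by rewrite exprM exprn_ge0 ?sqr_ge0 // exprn_ile1 ?sqr_ge0.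
have := norm_natr_mul_sqr_expr_le2 m q_le1.
by rewrite !ler_norml; lra.
Qed.

Theorem corollaryA1 (sigma : nat) (Hsigma : (2 <= sigma)%N) :
  (forall n : nat, (2 <= n)%N ->
     let p : rat := (sigma%:R - 1) / sigma%:R in
     let m : nat := (n - 1)%N in
     let q : rat := (2 - sigma%:R) / sigma%:R in
     var_k sigma n =
       m%:R * p * (1 - p) / 4 - m%:R * p * (1 - p) * q ^+ (m - 1)%N / 2
       + (1 - q ^+ (2 * m)%N) / 16)
  /\ var_k sigma 2 = 0
  /\ (exists C : rat, forall n : nat, (2 <= n)%N ->
        `|var_k sigma n - (n - 1)%:R * (sigma%:R - 1) / (4 * sigma%:R ^+ 2)| <= C).
Proof.
have sigma_gt0 : (0 < sigma)%N by apply: leq_trans Hsigma.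
split; first by case=> [|[|m]] // _; rewrite /= !subn1 /=; exact: var_kE.
split; first by rewrite var_kE //=; field; rewrite pnatr_eq0 -lt0n.
by exists 1; case=> [|[|m]] // _; apply: var_k_sub_linear_le1.
Qed.
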